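(* Let $a,b,g,h>0$ with $h=g+b+a$. Then the Minkowskian planar 4R linkage with these link lengths is of crank–rocker type.
   Context: Link lengths: $a$ input crank, $b$ output crank, $g$ ground (fixed link), $h$ coupler. Put $T_1=g+b-h-a$, $T_2=a-g+b-h$, $T_3=g-a-b-h$, $T_4=g-a+b+h$, $T_5=a-h+g+b$. The input crank is a crank if $T_1T_2\ge0$ and $T_3T_4\le0$, a rocker if $T_1T_2<0$ and $T_3T_4\le0$, and a superrocker if $T_1T_2<0$ and $T_3T_4>0$. The output crank is a crank if $T_1\ge0$ and $T_4T_5\ge0$, a rocker if $T_1<0$ and $T_4T_5\ge0$, and a superrocker if $T_1<0$ and $T_4T_5<0$. The linkage is of type ''X–Y'' if its input crank is of type X and its output crank of type Y. *)

From HB Require Import structures.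
From mathcomp Require Import all_boot all_order all_algebra.
Set Implicit Arguments. Unset Strict Implicit. Unset Printing Implicit Defensive.
Import Order.TTheory GRing.Theory Num.Theory.
Local Open Scope ring_scope.

Inductive crank_kind := Crank | Rocker | Superrocker.

Section Linkage.
Variable R : realFieldType.
(* a input crank, b output crank, g ground link, h coupler *)
Variables a b g h : R.

Definition T1 : R := g + b - h - a.
Definition T2 : R := a - g + b - h.
Definition T3 : R := g - a - b - h.
Definition T4 : R := g - a + b + h.
Definition T5 : R := a - h + g + b.

Definition input_is (k : crank_kind) : Prop :=
  match k with
  | Crank => 0 <= T1 * T2 /\ T3 * T4 <= 0
  | Rocker => T1 * T2 < 0 /\ T3 * T4 <= 0
  | Superrocker => T1 * T2 < 0 /\ 0 < T3 * T4
  end.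

Definition output_is (k : crank_kind) : Prop :=
  match k with
  | Crank => 0 <= T1 /\ 0 <= T4 * T5
  | Rocker => T1 < 0 /\ 0 <= T4 * T5
  | Superrocker => T1 < 0 /\ T4 * T5 < 0
  end.

Definition linkage_type (X Y : crank_kind) : Prop := input_is X /\ output_is Y.
End Linkage.

From mathcomp Require Import all_boot all_order all_algebra.
From mathcomp Require Import ring lra.
Import Order.TTheory GRing.Theory Num.Theory.
Local Open Scope ring_scope.

(* When the coupler is as long as the other three links together, [T5]
   vanishes, which makes the output test collapse to the sign of [T1]; all
   other [T_i] have a sign fixed by positivity of the lengths. *)

Section SignTests.
Variables (R : realFieldType) (a b g h : R).

Lemma input_crank_of_signs :
  T1 a b g h <= 0 -> T2 a b g h <= 0 -> T3 a b g h <= 0 -> 0 <= T4 a b g h ->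
  input_is a b g h Crank.
Proof.
move=> T1le0 T2le0 T3le0 T4ge0; split.
- by rewrite -mulrNN; apply: mulr_ge0; rewrite oppr_ge0.
- by rewrite mulr_le0_ge0.
Qed.

Lemma output_rocker_of_T5_eq0 :
  T1 a b g h < 0 -> T5 a b g h = 0 -> output_is a b g h Rocker.
Proof. by move=> T1lt0 T5eq0; split; rewrite // T5eq0 mulr0. Qed.

End SignTests.

Section LongCoupler.
Variables (R : realFieldType) (a b g : R).
Let h := g + b + a.

Lemma T1_long_coupler : T1 a b g h = - (2 * a).
Proof. by rewrite /T1 /h; ring. Qed.

Lemma T2_long_coupler : T2 a b g h = - (2 * g).
Proof. by rewrite /T2 /h; ring. Qed.

Lemma T3_long_coupler : T3 a b g h = - (2 * (a + b)).
Proof. by rewrite /T3 /h; ring. Qed.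

Lemma T4_long_coupler : T4 a b g h = 2 * (g + b).
Proof. by rewrite /T4 /h; ring. Qed.

Lemma T5_long_coupler : T5 a b g h = 0.
Proof. by rewrite /T5 /h; ring. Qed.

End LongCoupler.

Theorem mainTheorem15 (R : realFieldType) (a b g h : R)
  (ha : 0 < a) (hb : 0 < b) (hg : 0 < g) (hh : 0 < h)
  (hsum : h = g + b + a) :
  linkage_type a b g h Crank Rocker.
Proof.
subst h; split.
- apply: input_crank_of_signs.
  + rewrite T1_long_coupler; lra.
  + rewrite T2_long_coupler; lra.
  + rewrite T3_long_coupler; lra.
  + rewrite T4_long_coupler; lra.
- apply: output_rocker_of_T5_eq0; last exact: T5_long_coupler.
  rewrite T1_long_coupler; lra.
Qed.
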